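(* Let $a$ and $w$ be non-negative integers and let $f:\mathbb{N}\to\mathbb{N}$ be an arbitrary non-decreasing function. There exist integers $w_0$ and $n_0$ such that the following holds. If a graph $G$ has a proper path decomposition of interior width at most $w$, adhesion at most $a$, and order at least $n_0$, then for some $w'\le w_0$ and $p\le a$, $G$ also has a $p$-linked proper path decomposition of interior width at most $w'$ and order at least $f(w')$.
   Context: A path decomposition of a graph $G$ is a pair $(P,\beta)$ where $P$ is a path and $\beta$ assigns to each node of $P$ a subset (bag) of $V(G)$ such that every edge of $G$ has both ends in some bag and for every vertex $v$ the nodes whose bags contain $v$ form a non-empty subpath of $P$. Let $s,t$ be the first and last nodes of $P$. For a node $x\neq s$ let $l(x)$ be the preceding node and $L(x)=\beta(l(x))\cap\beta(x)$; for $x\neq t$ let $r(x)$ be the following node and $R(x)=\beta(r(x))\cap\beta(x)$. The decomposition is proper if $\beta(x)\not\subseteq\beta(y)$ for all distinct nodes $x,y$. Its interior width is the maximum of $|\beta(x)|-1$ over nodes $x\notin\{s,t\}$. Its adhesion is the maximum of $|\beta(x)\cap\beta(y)|$ over adjacent nodes $x,y$ of $P$. It is $p$-linked if $|L(x)|=p$ for all $x\neq s$ and $G$ contains $p$ pairwise vertex-disjoint paths from $R(s)$ to $L(t)$. Its order is $|V(P)|$. *)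

From mathcomp Require Import all_boot.
Set Implicit Arguments. Unset Strict Implicit. Unset Printing Implicit Defensive.

Definition simple_graph (T : finType) (e : rel T) : Prop :=
  symmetric e /\ irreflexive e.

(* A path decomposition (P, beta) is represented by the sequence of bags
   B = [:: beta(x_0); ...; beta(x_{n-1})] along the path P = x_0 ... x_{n-1};
   the order is size B.  The i-th bag is [bag B i]. *)
Definition bag (T : finType) (B : seq {set T}) (i : nat) : {set T} :=
  nth set0 B i.

Definition is_path_decomposition (T : finType) (e : rel T) (B : seq {set T}) : Prop :=
  0 < size B /\
  (forall x y, e x y -> exists2 i, i < size B & (x \in bag B i) && (y \in bag B i)) /\
  (forall v, exists2 i, i < size B & v \in bag B i) /\
  (forall v i j k, i <= j -> j <= k -> k < size B ->
      v \in bag B i -> v \in bag B k -> v \in bag B j).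

Definition proper_pd (T : finType) (B : seq {set T}) : Prop :=
  forall i j, i < size B -> j < size B -> i <> j -> ~~ (bag B i \subset bag B j).

(* interior width at most w: |beta(x)| - 1 <= w for all nodes x other than s, t *)
Definition interior_width_le (T : finType) (B : seq {set T}) (w : nat) : Prop :=
  forall i, 0 < i -> i < (size B).-1 -> #|bag B i| <= w.+1.

Definition adhesion_le (T : finType) (B : seq {set T}) (a : nat) : Prop :=
  forall i, i.+1 < size B -> #|bag B i :&: bag B i.+1| <= a.

(* R(s) and L(t); these are only defined when the path has at least two
   nodes; by convention they are empty otherwise. *)
Definition Rs (T : finType) (B : seq {set T}) : {set T} :=
  if 1 < size B then bag B 0 :&: bag B 1 else set0.
Definition Lt (T : finType) (B : seq {set T}) : {set T} :=
  if 1 < size B then bag B (size B).-2 :&: bag B (size B).-1 else set0.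

Definition gpath (T : finType) (e : rel T) (P : seq T) : bool :=
  if P is x :: r then path e x r && uniq P else false.

Definition starts_in (T : finType) (P : seq T) (A : {set T}) : bool :=
  if P is x :: _ then x \in A else false.
Definition ends_in (T : finType) (P : seq T) (A : {set T}) : bool :=
  if P is x :: r then last x r \in A else false.

Definition disjoint_paths (T : finType) (e : rel T) (p : nat) (A C : {set T}) : Prop :=
  exists Q : 'I_p -> seq T,
    (forall k, [&& gpath e (Q k), starts_in (Q k) A & ends_in (Q k) C]) /\
    (forall k l, k <> l -> forall v, v \in Q k -> v \notin Q l).

Definition p_linked (T : finType) (e : rel T) (B : seq {set T}) (p : nat) : Prop :=
  (forall i, 0 < i -> i < size B -> #|bag B i.-1 :&: bag B i| = p) /\
  disjoint_paths e p (Rs B) (Lt B).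

From mathcomp Require Import all_boot zify.
From Stdlib Require Import Classical ClassicalEpsilon.
Set Implicit Arguments. Unset Strict Implicit. Unset Printing Implicit Defensive.

(* Induction on the adhesion bound [a]. Split a long decomposition into
   blocks of consecutive bags. If, in some block, the adhesion sets at its two
   ends cannot be separated by fewer than [a] vertices, then every adhesion set
   of the block has exactly [a] vertices and Menger's theorem links the ends by
   [a] disjoint paths: the block is an [a]-linked decomposition. Otherwise,
   cutting every block along a separator of fewer than [a] vertices yields a
   proper decomposition of adhesion [< a], with one bag per block and width
   bounded in terms of [w] and the block length, to which induction applies.
   Menger's theorem itself is proved by induction on the number of edges. *)

(** * Separations and Menger's theorem *)

Section Separation.
Variable T : finType.
Implicit Types (r : rel T) (A C R S X Z : {set T}) (P p : seq T) (x y z : T).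

Definition separates r X A C : Prop :=
  forall P, gpath r P -> starts_in P A -> ends_in P C -> exists2 v, v \in P & v \in X.

Definition avoid_rel r Z : rel T := [rel x y | [&& r x y, x \notin Z & y \notin Z]].

Definition reach r S A : {set T} :=
  [set z | [exists a in A, (a \notin S) && connect (avoid_rel r S) a z]].

Lemma ends_in_rcons p x A : ends_in (rcons p x) A = (x \in A).
Proof. by case: p => [|h t] //=; rewrite last_rcons. Qed.

Lemma gpath_rev r P : symmetric r -> gpath r P -> gpath r (rev P).
Proof.
move=> sr; case: P => [|x p] //= /andP [hp hu].
have : uniq (rev (x :: p)) by rewrite rev_uniq.
rewrite lastI rev_rcons /= => ->; rewrite andbT rev_path.
by rewrite (eq_path (e' := r)) // => a b; rewrite sr.
Qed.

Lemma starts_in_rev P A : starts_in (rev P) A = ends_in P A.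
Proof. by case: P => [|x p] //; rewrite (lastI x p) rev_rcons ends_in_rcons. Qed.

Lemma ends_in_rev P A : ends_in (rev P) A = starts_in P A.
Proof. by case: P => [|x p] //; rewrite rev_cons ends_in_rcons. Qed.

Lemma separates_sym r X A C : symmetric r -> separates r X A C -> separates r X C A.
Proof.
move=> sr hs P gP sP eP.
have [v] : exists2 v, v \in rev P & v \in X.
  by apply: hs; rewrite ?starts_in_rev ?ends_in_rev //; apply: gpath_rev.
by rewrite mem_rev; exists v.
Qed.

Lemma sub_gpath r r' P : subrel r r' -> gpath r P -> gpath r' P.
Proof. by move=> sub; case: P => // x p /= /andP [hp ->]; rewrite (sub_path sub hp). Qed.

Lemma avoid_rel_sym r Z : symmetric r -> symmetric (avoid_rel r Z).
Proof. by move=> sr x y; rewrite /avoid_rel /= sr; case: (x \in Z); case: (y \in Z). Qed.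

Lemma avoid_path r Z x p :
  path r x p -> all (fun z => z \notin Z) (x :: p) -> path (avoid_rel r Z) x p.
Proof.
elim: p x => [|y p IH] x //= /andP [hxy hp] /and3P [hx hy hall].
by rewrite /avoid_rel /= hxy hx hy IH //= hy.
Qed.

Lemma avoid_path_notin r Z x p :
  x \notin Z -> path (avoid_rel r Z) x p -> all (fun z => z \notin Z) (x :: p).
Proof.
elim: p x => [|y p IH] x hx /=; first by rewrite hx.
by case/andP => /and3P [_ _ hy] hp; rewrite hx; exact: IH.
Qed.

Lemma connect_avoid_notin r Z x y :
  x \notin Z -> connect (avoid_rel r Z) x y -> y \notin Z.
Proof.
move=> hx /connectP [p hp ->].
by have /allP := avoid_path_notin hx hp; apply; apply: mem_last.
Qed.

Lemma separates_disconnect r Z A C a c : separates r Z A C -> a \in A -> c \in C ->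
  a \notin Z -> ~ connect (avoid_rel r Z) a c.
Proof.
move=> hs ha hc haZ /connectP [p hp hcl]; rewrite hcl in hc.
case: (shortenP hp) hc => p' hp' hu _ hc.
have /allP hall := avoid_path_notin haZ hp'.
have [v hv hvZ] : exists2 v, v \in a :: p' & v \in Z.
  apply: hs => //=; rewrite -/(uniq (a :: p')) hu andbT.
  by apply: sub_path hp' => x y /and3P [].
by have := hall v hv; rewrite hvZ.
Qed.

Lemma last_in_closed r Z R x p : path r x p -> all (fun z => z \notin Z) (x :: p) ->
  (forall z y, r z y -> z \notin Z -> y \notin Z -> z \in R -> y \in R) ->
  x \in R -> last x p \in R.
Proof.
elim: p x => [|y p IH] x //= /andP [hxy hp] /and3P [hx hy hall] cl hR.
by apply: IH => //=; [rewrite hy | apply: (cl x y)].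
Qed.

Lemma reach_notin r S A z : z \in reach r S A -> z \notin S.
Proof. by rewrite inE => /existsP [a /and3P [_ haS hc]]; apply: connect_avoid_notin hc. Qed.

Lemma reach_self r S A z : z \in A -> z \notin S -> z \in reach r S A.
Proof. by move=> hz hzS; rewrite inE; apply/existsP; exists z; rewrite hz hzS connect0. Qed.

Lemma reach_step r S A z y : z \in reach r S A -> avoid_rel r S z y -> y \in reach r S A.
Proof.
rewrite !inE => /existsP [a /and3P [ha haS hc]] hzy; apply/existsP; exists a.
by rewrite ha haS (connect_trans hc (connect1 hzy)).
Qed.

Lemma reach_connect r S A z y : symmetric r ->
  z \in reach r S A -> connect (avoid_rel r S) y z -> y \in reach r S A.
Proof.
move=> sr; rewrite !inE => /existsP [a /and3P [ha haS hc]] hyz; apply/existsP; exists a.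
by rewrite ha haS (connect_trans hc) // (sym_connect_sym (avoid_rel_sym S sr)).
Qed.

Lemma reach_disjoint r S A C z : symmetric r -> separates r S A C ->
  z \in reach r S A -> z \in reach r S C -> False.
Proof.
move=> sr hs; rewrite !inE => /existsP [a /and3P [ha haS hac]] /existsP [c /and3P [hc _ hcc]].
apply: (separates_disconnect hs ha hc haS); apply: (connect_trans hac).
by rewrite (sym_connect_sym (avoid_rel_sym S sr)).
Qed.

End Separation.

Section Gluing.
Variable T : finType.
Implicit Types (r e : rel T) (A C S X Y : {set T}) (P q : seq T) (x y z : T).

Definition first_hit r A X P : Prop := exists q z,
  [/\ P = rcons q z, gpath r P, starts_in P A, z \in X & all (fun w => w \notin X) q].

Definition disjoint_family k (Q : 'I_k -> seq T) : Prop :=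
  forall i j, i <> j -> forall v, v \in Q i -> v \notin Q j.

Lemma gpath_first_hit r A X P : gpath r P -> starts_in P A -> ends_in P X ->
  exists2 P', first_hit r A X P' & {subset P' <= P}.
Proof.
move=> gP sP eP; have hP : has [in X] P.
  by case: P gP sP eP => [|a p] // _ _ he; apply/hasP; exists (last a p); rewrite ?mem_last.
case: (split_find hP) gP sP => z q s2 hz hn gP sP.
exists (rcons q z); last by move=> w hw; rewrite mem_cat hw.
exists q, z; split => //.
- case: q gP {hn sP} => [|h t] //= /andP [hp hu].
  move: hp; rewrite cat_path => /andP [-> _] /=.
  by move: (hu : uniq ((h :: rcons t z) ++ s2)); rewrite cat_uniq => /andP [].
- by case: q sP {hn gP}.
- by apply/allP => w hw; apply/negP => hwX; move/hasP: hn; apply; exists w.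
Qed.

Lemma disjoint_paths_first_hit r k A X : disjoint_paths r k A X ->
  exists2 Q : 'I_k -> seq T, forall i, first_hit r A X (Q i) & disjoint_family Q.
Proof.
case=> Q0 [hQ0 hd0].
have hex i : exists P, first_hit r A X P /\ {subset P <= Q0 i}.
  case/and3P: (hQ0 i) => gP sP eP.
  by have [P hP hsub] := gpath_first_hit gP sP eP; exists P.
have [Q hQ] := fin_all_exists hex.
exists Q => [i | i j hij v hv]; first by case: (hQ i).
by apply/negP => /(proj2 (hQ j)); apply/negP; apply: hd0 hij _ (proj2 (hQ i) _ hv).
Qed.

Lemma reach_first_hit r S A X P : S \subset X -> first_hit r A X P ->
  forall w, w \in P -> w \notin S -> w \in reach r S A.
Proof.
move=> hSX [q [z [-> gP sP _ hall]]] w.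
have nS w' : w' \notin X -> w' \notin S by apply: contra; apply: (subsetP hSX).
case: q gP sP hall => [|h t] /=.
  by move=> _ hz _; rewrite inE => /eqP -> hzS; apply: reach_self.
move=> /andP [hp _] hh /andP [hhX hall].
have hallS : all (fun w => w \notin S) (h :: t).
  by rewrite /= nS //=; apply/allP => w' hw'; apply: nS; move/allP: hall; apply.
have hreach : {in h :: t, forall w, w \in reach r S A}.
  move: hp; rewrite rcons_path => /andP [hp _] w' hw'; rewrite inE.
  apply/existsP; exists h; rewrite hh (nS _ hhX) /=.
  exact: (path_connect (avoid_path hp hallS) hw').
rewrite -rcons_cons mem_rcons inE => /orP [/eqP -> hzS | /hreach //].
apply: (reach_step (z := last h t)); first by apply: hreach; apply: mem_last.
move: hp; rewrite rcons_path => /andP [_ hlz].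
by rewrite /avoid_rel /= hlz hzS andbT; move/allP: hallS; apply; apply: mem_last.
Qed.

Lemma first_hit_last r A X P x0 : first_hit r A X P -> last x0 P \in P /\ last x0 P \in X.
Proof. by case=> q [z [-> _ _ hz _]]; rewrite last_rcons mem_rcons mem_head. Qed.

Lemma disjoint_family_inj k (Q : 'I_k -> seq T) (f : 'I_k -> T) :
  disjoint_family Q -> (forall i, f i \in Q i) -> injective f.
Proof.
move=> hd hf i j hij; apply: NNPP => hne.
by have := hd i j hne (f i) (hf i); rewrite hij hf.
Qed.

Lemma inj_card_match k (f g : 'I_k -> T) Y : injective f -> injective g ->
  (forall i, f i \in Y) -> (forall i, g i \in Y) -> #|Y| = k ->
  exists2 h : 'I_k -> 'I_k, injective h & forall i, f (h i) = g i.
Proof.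
move=> finj ginj hfY hgY hY.
have hYf : Y = f @: [set: 'I_k].
  apply/eqP; rewrite eq_sym eqEcard card_imset // cardsT card_ord hY leqnn andbT.
  by apply/subsetP => u /imsetP [j _ ->].
have hex i : exists j, f j = g i by move: (hgY i); rewrite hYf => /imsetP [j _ ->]; exists j.
have [h hh] := fin_all_exists hex.
by exists h => // i i' hii'; apply: ginj; rewrite -!hh hii'.
Qed.

(* The reversed path from [C] continues a path from [A] that stopped at [z];
   when [z = x], across the edge [xy]. *)
Lemma glue_tail e C S x y z P : symmetric e -> x \notin S -> y \notin S -> e x y ->
  first_hit e C (y |: S) P -> z \in x |: S -> last y P = (if z == x then y else z) ->
  let P2 := if z == x then rev P else behead (rev P) in
  [/\ path e z P2, uniq P2, last z P2 \in C, {subset P2 <= P} & all (fun w => w \notin S) P2].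
Proof.
move=> se hxS hyS exy [q [z2 [-> gP sP hz2 hall]]] hz hlast P2.
have /= [hp hu] : path e z2 (rev q) /\ uniq (z2 :: rev q).
  by move: (gpath_rev se gP); rewrite rev_rcons => /andP [].
have hlC : last z2 (rev q) \in C by move: sP; rewrite -ends_in_rev rev_rcons.
have hqS : all (fun w => w \notin S) (rev q).
  apply/allP => w; rewrite mem_rev => hw; move/allP: hall => /(_ w hw).
  by rewrite in_setU1 negb_or => /andP [].
rewrite last_rcons in hlast; rewrite /P2 rev_rcons; case: eqP hlast => [-> | _] hlast.
  rewrite hlast in hp hu hlC *; rewrite /= exy hp hu hyS hqS; split=> // w.
  by rewrite inE mem_rcons inE mem_rev orbC.
rewrite -hlast; case/andP: hu => _ hu; split=> // w; rewrite mem_rev mem_rcons inE => ->.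
exact: orbT.
Qed.

End Gluing.

Section Menger.
Variable T : finType.
Implicit Types (r e : rel T) (A C S X Y Z : {set T}) (P q : seq T) (x y z : T).

Definition separators_ge r k A C : Prop := forall X, separates r X A C -> k <= #|X|.

Definition edge_added e e' x y : Prop :=
  subrel e' e /\
  forall z w, e z w -> ~~ e' z w -> ((z == x) && (w == y)) || ((z == y) && (w == x)).

Lemma edge_added_sym e e' x y : edge_added e e' x y -> edge_added e e' y x.
Proof.
case=> hsub hdel; split=> // z w hzw hn; rewrite orbC.
by case/orP: (hdel z w hzw hn) => /andP [-> ->]; rewrite ?orbT.
Qed.

(* The component of a start vertex in [e' - Z] avoids [x] and stays on the
   side of [A], which the new edge cannot leave. *)
Lemma separates_edge_added e e' S A C x y : symmetric e' -> edge_added e e' x y ->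
  separates e' S A C -> x \in reach e' S A -> y \in reach e' S C ->
  forall Z, separates e' Z A (x |: S) -> separates e Z A C.
Proof.
move=> se' [hsub hdel] hS hx hy Z hZ P gP sP eP; apply: NNPP => hn.
have hall : all (fun z => z \notin Z) P.
  by apply/allP => w hw; apply/negP => hwZ; apply: hn; exists w.
case: P gP sP eP hall {hn} => [|a p] //= /andP [hp _] ha hc /andP [haZ hallp].
pose R := [set z | connect (avoid_rel e' Z) a z].
have RX z : z \in R -> z \notin x |: S.
  by rewrite inE => hz; apply/negP => hzX; apply: (separates_disconnect hZ ha hzX haZ hz).
have RS z : z \in R -> z \notin S by move/RX; rewrite in_setU1 negb_or => /andP [].
have RA z : z \in R -> z \in reach e' S A.
  rewrite inE => /connectP [q hq ->].
  have hq' : path (avoid_rel e' S) a q.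
    apply: (sub_in_path (P := mem R)); last exact: hq.
      by move=> z1 z2 /RS h1 /RS h2 /and3P [h12 _ _]; rewrite /avoid_rel /= h12 h1 h2.
    by apply/allP => z3 hz3; change (z3 \in R); rewrite inE (path_connect hq hz3).
  have haS : a \notin S by apply: RS; rewrite inE connect0.
  rewrite inE; apply/existsP; exists a; rewrite ha haS /=.
  exact: (path_connect hq' (mem_last a q)).
have cl z w : e z w -> z \notin Z -> w \notin Z -> z \in R -> w \in R.
  move=> hzw hzZ hwZ hzR; case he' : (e' z w).
    rewrite /R !inE in hzR *; apply: (connect_trans hzR); apply: connect1.
    by rewrite /avoid_rel /= he' hzZ hwZ.
  case/orP: (hdel z w hzw (negbT he')) => /andP [/eqP hz _]; subst z.
    by move: (RX x hzR); rewrite setU11.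
  by case: (reach_disjoint se' hS (RA y hzR) hy).
have hlast : last a p \in R.
  apply: (last_in_closed hp _ cl); first by rewrite /= haZ.
  by rewrite inE connect0.
by apply: (reach_disjoint se' hS (RA _ hlast)); apply: reach_self => //; apply: RS.
Qed.

(* If [S] separates [A] from [C] in [e'] but not in [e], the new edge joins
   the side of [A] to the side of [C]: otherwise the side of [A], enlarged by
   the component of the new edge's far end, would be closed in [e - S]. *)
Lemma edge_added_crossing e e' S A C u v : symmetric e -> symmetric e' ->
  edge_added e e' u v -> e u v -> separates e' S A C -> ~ separates e S A C ->
  exists x y, [/\ edge_added e e' x y, e x y, x \in reach e' S A & y \in reach e' S C].
Proof.
move=> se se' huv euv hS hnS; case: (huv) => hsub hdel.
suff : (u \in reach e' S A) && (v \in reach e' S C) || (v \in reach e' S A) && (u \in reach e' S C).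
  case/orP => /andP [hu hv]; first by exists u, v.
  by exists v, u; rewrite se; split=> //; apply: edge_added_sym.
apply: contraT => hn; exfalso; apply: hnS => P gP sP eP; apply: NNPP => hn2.
have hall : all (fun z => z \notin S) P.
  by apply/allP => w hw; apply/negP => hwS; apply: hn2; exists w.
case: P gP sP eP hall {hn2} => [|a p] //= /andP [hp _] ha hc hall.
pose RA := reach e' S A; pose comp z := [set w | connect (avoid_rel e' S) z w].
pose R := RA :|: (if u \in RA then comp v else set0) :|: (if v \in RA then comp u else set0).
have cl z w : e z w -> z \notin S -> w \notin S -> z \in R -> w \in R.
  move=> hzw hzS hwS hz; case he' : (e' z w).
    have st : avoid_rel e' S z w by rewrite /avoid_rel /= he' hzS hwS.
    move: hz; rewrite !in_setU => /orP [/orP [hz | ] | ].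
    - by rewrite (reach_step hz st).
    - by case: (u \in RA); rewrite ?inE // => hc'; rewrite (connect_trans hc' (connect1 st)) !orbT.
    - by case: (v \in RA); rewrite ?inE // => hc'; rewrite (connect_trans hc' (connect1 st)) !orbT.
  case/orP: (hdel z w hzw (negbT he')) => /andP [/eqP hz' /eqP hw']; subst z w.
    case hu : (u \in RA); first by rewrite /R hu !inE connect0 orbT.
    by move: hz; rewrite /R !in_setU hu; case: (v \in RA); rewrite ?inE ?orbF.
  case hv : (v \in RA); first by rewrite /R hv !inE connect0 !orbT.
  by move: hz; rewrite /R !in_setU hv; case: (u \in RA); rewrite ?inE ?orbF.
have hlast : last a p \in R.
  by apply: (last_in_closed hp hall cl); case/andP: hall => haS _; rewrite /R !in_setU reach_self.
have hlC : last a p \in reach e' S C.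
  by apply: reach_self => //; move/allP: (hall : all _ (a :: p)); apply; apply: mem_last.
move: hlast; rewrite !in_setU => /orP [/orP [hl | ] | ].
- exact: (reach_disjoint se' hS hl hlC).
- case hu : (u \in RA); rewrite ?inE // => hl.
  by move: hn; rewrite hu (reach_connect se' hlC hl).
- case hv : (v \in RA); rewrite ?inE // => hl.
  by move: hn; rewrite hv (reach_connect se' hlC hl) orbT.
Qed.

Lemma gpath_rcons_cat r A C q z P2 : gpath r (rcons q z) -> starts_in (rcons q z) A ->
  path r z P2 -> uniq P2 -> last z P2 \in C -> (forall w, w \in rcons q z -> w \notin P2) ->
  [&& gpath r (rcons q z ++ P2), starts_in (rcons q z ++ P2) A & ends_in (rcons q z ++ P2) C].
Proof.
case: q => [|h t] gP sP hp hu hl hdisj.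
  by rewrite /= in sP *; rewrite sP hl hp hu (hdisj z) // mem_seq1.
rewrite rcons_cons in gP sP hdisj *; case/andP: gP => hp1 hu1; apply/and3P; split => //.
  apply/andP; split; first by rewrite cat_path hp1 last_rcons hp.
  rewrite cat_uniq hu1 hu andbT /=.
  by apply/hasP => [[w hw1 hw2]]; move: (hdisj w hw2); rewrite hw1.
by rewrite /= last_cat last_rcons.
Qed.

Lemma disjoint_paths_glue e k A C S x y (Q1 Q2 : 'I_k -> seq T) :
  symmetric e -> x \notin S -> y \notin S -> e x y -> #|y |: S| = k ->
  (forall i, first_hit e A (x |: S) (Q1 i)) -> disjoint_family Q1 ->
  (forall j, first_hit e C (y |: S) (Q2 j)) -> disjoint_family Q2 ->
  (forall i j w, w \in Q1 i -> w \in Q2 j -> w \notin S -> False) ->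
  disjoint_paths e k A C.
Proof.
move=> se hxS hyS exy hcard hQ1 hd1 hQ2 hd2 h12.
pose zi i := last x (Q1 i); pose hd j := last y (Q2 j).
have zin i : zi i \in Q1 i := (first_hit_last x (hQ1 i)).1.
have ziX i : zi i \in x |: S := (first_hit_last x (hQ1 i)).2.
have hdin j : hd j \in Q2 j := (first_hit_last y (hQ2 j)).1.
have hdY j : hd j \in y |: S := (first_hit_last y (hQ2 j)).2.
pose tgt i := if zi i == x then y else zi i.
have tgtY i : tgt i \in y |: S.
  rewrite /tgt; case: eqP => [_ | /eqP hne]; first by rewrite setU11.
  by move: (ziX i); rewrite !in_setU1 (negbTE hne) => /= ->; rewrite orbT.
have tgt_inj : injective tgt.
  have zi_inj := disjoint_family_inj hd1 zin.
  move=> i i'; rewrite /tgt; case: eqP => [h1 | /eqP h1]; case: eqP => [h2 | /eqP h2] h.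
  - by apply: zi_inj; rewrite h1 h2.
  - by move: (ziX i'); rewrite in_setU1 (negbTE h2) -h (negbTE hyS).
  - by move: (ziX i); rewrite in_setU1 (negbTE h1) h (negbTE hyS).
  - exact: zi_inj.
have [jf jf_inj hjf] := inj_card_match (disjoint_family_inj hd2 hdin) tgt_inj hdY tgtY hcard.
pose part i := if zi i == x then rev (Q2 (jf i)) else behead (rev (Q2 (jf i))).
have htail i := glue_tail se hxS hyS exy (hQ2 (jf i)) (ziX i) (hjf i).
have cross i j w : w \in Q1 i -> w \in part j -> False.
  by case: (htail j) => _ _ _ hsub /allP hS hw1 hw2; apply: (h12 _ _ _ hw1 (hsub _ hw2) (hS _ hw2)).
exists (fun i => Q1 i ++ part i); split => [i | i i' hne w].
  case: (htail i); rewrite -/(part i) => hp hu hl _ _.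
  case: (hQ1 i) => q [z [hq gP sP _ _]]; rewrite hq in gP sP *.
  have hz : zi i = z by rewrite /zi hq last_rcons.
  rewrite hz in hp hl; apply: gpath_rcons_cat => // w hw; apply/negP => hw'.
  by apply: (cross i i w) => //; rewrite hq.
rewrite !mem_cat => /orP [hw | hw]; apply/negP => /orP [hw' | hw'].
- by move: (hd1 i i' hne w hw); rewrite hw'.
- exact: (cross i i' w hw hw').
- exact: (cross i' i w hw' hw).
- have hj : jf i <> jf i' by move/jf_inj.
  case: (htail i) (htail i') => _ _ _ hsub _ [_ _ _ hsub' _].
  by move: (hd2 _ _ hj w (hsub _ hw)); rewrite (hsub' _ hw').
Qed.

Lemma sub_first_hit r r' A X P : subrel r r' -> first_hit r A X P -> first_hit r' A X P.
Proof. by move=> sub [q [z [hq gP sP hz hall]]]; exists q, z; split => //; apply: sub_gpath gP. Qed.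

Lemma card_setU1_eq k S x : k <= #|x |: S| -> #|S| < k -> x \notin S /\ #|x |: S| = k.
Proof. by rewrite cardsU1; case: (x \in S) => /=; lia. Qed.

(* [x |: S] and [y |: S] are minimum separators in [e]; the [k] paths from
   [A] to [x |: S] and from [y |: S] to [C] given by Menger for [e'] meet only
   in [S], and are glued along the edge [xy]. *)
Lemma menger_crossing e e' k A C S x y :
  symmetric e -> symmetric e' -> edge_added e e' x y -> e x y ->
  (forall A' C', separators_ge e' k A' C' -> disjoint_paths e' k A' C') ->
  separators_ge e k A C -> separates e' S A C -> #|S| < k ->
  x \in reach e' S A -> y \in reach e' S C -> disjoint_paths e k A C.
Proof.
move=> se se' hxy exy IH hk hS hlt hx hy; have hsub := proj1 hxy.
have HX := separates_edge_added se' hxy hS hx hy.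
have HY Z : separates e' Z C (y |: S) -> separates e Z A C.
  move=> hZ; apply: separates_sym => //.
  exact: (separates_edge_added se' (edge_added_sym hxy) (separates_sym se' hS) hy hx hZ).
have [hxS cX] : x \notin S /\ #|x |: S| = k.
  apply: card_setU1_eq hlt; apply: hk; apply: HX => -[|a p] //= _ _ hl.
  by exists (last a p); rewrite ?mem_last.
have [hyS cY] : y \notin S /\ #|y |: S| = k.
  apply: card_setU1_eq hlt; apply: hk; apply: HY => -[|a p] //= _ _ hl.
  by exists (last a p); rewrite ?mem_last.
have [Q1 hQ1 hd1] := disjoint_paths_first_hit (IH _ _ (fun Z hZ => hk _ (HX Z hZ))).
have [Q2 hQ2 hd2] := disjoint_paths_first_hit (IH _ _ (fun Z hZ => hk _ (HY Z hZ))).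
apply: (disjoint_paths_glue se hxS hyS exy cY (Q1 := Q1) (Q2 := Q2)) => //.
- by move=> i; apply: sub_first_hit (hQ1 i).
- by move=> j; apply: sub_first_hit (hQ2 j).
move=> i j w hw1 hw2 hwS.
apply: (reach_disjoint se' hS (reach_first_hit (subsetUr _ _) (hQ1 i) hw1 hwS)).
exact: (reach_first_hit (subsetUr _ _) (hQ2 j) hw2 hwS).
Qed.

Lemma menger_no_edges e k A C : (forall x y, ~~ e x y) ->
  separators_ge e k A C -> disjoint_paths e k A C.
Proof.
move=> hne hs; have hk : k <= #|A :&: C|.
  apply: hs => -[|x [|y p]] //=; last by rewrite (negbTE (hne x y)).
  by move=> _ hx hc; exists x; rewrite ?inE ?hx ?hc.
exists (fun i => [:: enum_val (A := A :&: C) (widen_ord hk i)]); split.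
  by move=> i /=; have := enum_valP (A := A :&: C) (widen_ord hk i); rewrite inE => /andP [-> ->].
move=> i j hij v; rewrite !inE => /eqP ->; apply/negP => /eqP h.
by apply: hij; move/enum_val_inj: h => /(congr1 val) /= /val_inj.
Qed.

Definition del_edge e u v : rel T :=
  [rel x y | e x y && ~~ (((x == u) && (y == v)) || ((x == v) && (y == u)))].

Lemma del_edge_sym e u v : symmetric e -> symmetric (del_edge e u v).
Proof.
move=> se x y; rewrite /del_edge /= se; congr andb.
by case: (x == u); case: (x == v); case: (y == u); case: (y == v).
Qed.

Lemma edge_added_del_edge e u v : edge_added e (del_edge e u v) u v.
Proof. by split=> [x y /andP [] // | z w hzw]; rewrite /del_edge /= hzw negbK. Qed.

Lemma card_del_edge e u v : e u v ->
  #|[set p : T * T | del_edge e u v p.1 p.2]| < #|[set p : T * T | e p.1 p.2]|.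
Proof.
move=> euv; apply: proper_card; apply/properP; split.
  by apply/subsetP => p; rewrite !inE => /andP [].
by exists (u, v); rewrite !inE /= ?euv // /del_edge /= !eqxx euv.
Qed.

Theorem menger e k A C : symmetric e -> separators_ge e k A C -> disjoint_paths e k A C.
Proof.
move: {2}#|_| (leqnn #|[set p : T * T | e p.1 p.2]|) => n.
elim: n e A C => [|n IH] e A C hn se hk.
  apply: menger_no_edges hk => x y; apply/negP => exy.
  by move: hn; rewrite leqn0 => /eqP /cards0_eq /setP /(_ (x, y)); rewrite !inE exy.
case: (pickP (fun p : T * T => e p.1 p.2)) => [[u v] /= euv | none]; last first.
  by apply: menger_no_edges hk => x y; apply/negP => exy; move: (none (x, y)); rewrite /= exy.
pose e' := del_edge e u v; have se' : symmetric e' := del_edge_sym u v se.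
have he' : #|[set p : T * T | e' p.1 p.2]| <= n.
  by rewrite -ltnS; apply: leq_trans hn; apply: card_del_edge.
have IH' A' C' := IH e' A' C' he' se'.
case: (classic (separators_ge e' k A C)) => [h | hn'].
  have [Q [hQ hd]] := IH' A C h; exists Q; split => // i.
  case/and3P: (hQ i) => g -> ->; rewrite !andbT.
  by apply: sub_gpath g => x y /andP [].
have [S hS'] := not_all_ex_not _ _ hn'; have [hS hlt] := imply_to_and _ _ hS'.
have hnS : ~ separates e S A C by move/hk.
have [x [y [hxy exy hx hy]]] := edge_added_crossing se se' (edge_added_del_edge e u v) euv hS hnS.
apply: (menger_crossing se se' hxy exy IH' hk hS) => //.
by rewrite ltnNge; apply/negP.
Qed.

End Menger.

(** * Path decompositions from nested separations *)

Definition is_separation (T : finType) (e : rel T) (C D : {set T}) : Prop :=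
  (forall x y, e x y -> (x \in C) && (y \in C) || (x \in D) && (y \in D)) /\
  (forall v, (v \in C) || (v \in D)).

(* A nested sequence of separations [(C k, D k)], [k < m], yields the path
   decomposition with bags [C k :&: D k.-1], where [D (-1) = C m = setT]. *)
Section ChainDecomposition.
Variables (T : finType) (e : rel T) (m : nat) (C D : nat -> {set T}).

Definition chain_left i := if i < m then C i else setT.
Definition chain_right i := if i == 0 then setT else D i.-1.
Definition chain_decomp := mkseq (fun i => chain_left i :&: chain_right i) m.+1.

Hypothesis chain_sep : forall k, k < m -> is_separation e (C k) (D k).
Hypothesis chain_nested : forall k, k.+1 < m -> (C k \subset C k.+1) && (D k.+1 \subset D k).

Lemma size_chain_decomp : size chain_decomp = m.+1.
Proof. by rewrite size_mkseq. Qed.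

Lemma bag_chain_decomp i : i <= m -> bag chain_decomp i = chain_left i :&: chain_right i.
Proof. by move=> hi; rewrite /bag nth_mkseq. Qed.

Lemma chain_left_mono i j : i <= j -> chain_left i \subset chain_left j.
Proof.
rewrite /chain_left; case: (ltnP j m) => hj; last by rewrite subsetT.
move=> hij; rewrite (leq_ltn_trans hij hj).
elim: j hij hj => [|j IH]; first by rewrite leqn0 => /eqP ->.
rewrite leq_eqVlt => /orP [/eqP -> // | hij] hj.
by apply: subset_trans (IH hij (ltnW hj)) _; case/andP: (chain_nested hj).
Qed.

Lemma chain_right_anti i j : i <= j -> j <= m -> chain_right j \subset chain_right i.
Proof.
case: i => [|i] hij hjm; first by rewrite subsetT.
case: j hij hjm => // j; rewrite /chain_right /= !ltnS.
elim: j => [|j IH]; first by rewrite leqn0 => /eqP ->.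
rewrite leq_eqVlt => /orP [/eqP -> // | hij] hj.
by apply: subset_trans _ (IH hij (ltnW hj)); case/andP: (chain_nested hj).
Qed.

Lemma chain_bag_pair x y :
  (forall k, k < m -> (x \in C k) && (y \in C k) || (x \in D k) && (y \in D k)) ->
  exists2 i, i <= m & (x \in bag chain_decomp i) && (y \in bag chain_decomp i).
Proof.
move=> h; suff [i hi hb] : exists2 i, i <= m & [&& x \in chain_left i :&: chain_right i
    & y \in chain_left i :&: chain_right i] by exists i; rewrite ?bag_chain_decomp.
suff H j : j <= m -> (x \in chain_left j) && (y \in chain_left j) ->
    exists2 i, i <= j & [&& x \in chain_left i :&: chain_right i & y \in chain_left i :&: chain_right i].
  by apply: H => //; rewrite /chain_left ltnn !inE.
elim: j => [|j IH] hj hxy.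
  by exists 0 => //; rewrite !inE /chain_right /=; case/andP: hxy => -> ->.
case hC : ((x \in C j) && (y \in C j)).
  have [i hi hb] := IH (ltnW hj) (ltac:(by rewrite /chain_left hj)).
  by exists i => //; apply: leq_trans hi _.
exists j.+1 => //; rewrite !inE /chain_right /=.
by move: (h j hj); rewrite hC /= => /andP [-> ->]; case/andP: hxy => -> ->.
Qed.

Lemma chain_decomp_pd : is_path_decomposition e chain_decomp.
Proof.
split; first by rewrite size_chain_decomp.
split.
  move=> x y hxy; have [i hi hb] := chain_bag_pair (fun k hk => (chain_sep hk).1 x y hxy).
  by exists i; rewrite ?size_chain_decomp.
split.
  move=> v; have [i hi /andP [hb _]] : exists2 i, i <= m & (v \in bag chain_decomp i) && (v \in bag chain_decomp i).
    by apply: chain_bag_pair => k hk; rewrite !andbb; apply: (chain_sep hk).2.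
  by exists i; rewrite ?size_chain_decomp.
move=> v i j k hij hjk; rewrite size_chain_decomp ltnS => hkm.
have hjm := leq_trans hjk hkm; rewrite !bag_chain_decomp ?(leq_trans hij hjm) //.
rewrite !inE => /andP [hi _] /andP [_ hk]; apply/andP; split.
  exact: (subsetP (chain_left_mono hij)).
exact: (subsetP (chain_right_anti hjk hkm)).
Qed.

Lemma chain_decomp_adhesion i : i < m ->
  bag chain_decomp i :&: bag chain_decomp i.+1 = C i :&: D i.
Proof.
move=> him; rewrite !bag_chain_decomp ?(ltnW him) //; apply/setP => v.
have h1 := subsetP (chain_left_mono (leqnSn i)) v.
have h2 := subsetP (chain_right_anti (leqnSn i) him) v.
rewrite /chain_left him /chain_right /= in h1 h2 *; rewrite !inE.
case: (v \in C i) h1; case: (v \in D i) h2; rewrite ?andbF ?andbT //=.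
by move=> /(_ isT) -> /(_ isT) ->.
Qed.

End ChainDecomposition.

Lemma proper_pd_adjacent (T : finType) (e : rel T) (B : seq {set T}) :
  is_path_decomposition e B ->
  (forall i, i.+1 < size B -> ~~ (bag B i \subset bag B i.+1) && ~~ (bag B i.+1 \subset bag B i)) ->
  proper_pd B.
Proof.
move=> [_ [_ [_ hcvx]]] h i j hi hj hne; apply/negP => hsub.
case: (ltngtP i j) => hij; last by apply: hne.
- case/andP: (h i (leq_ltn_trans hij hj)) => /negP []; apply/subsetP => v hv.
  exact: (hcvx v i i.+1 j (leqnSn i) hij hj hv (subsetP hsub v hv)).
- case: i hi hsub hij {hne} => // i hi hsub hij.
  case/andP: (h i hi) => _ /negP []; apply/subsetP => v hv.
  exact: (hcvx v j i i.+1 hij (leqnSn i) hi (subsetP hsub v hv) hv).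
Qed.

Lemma path_crosses_separation (T : finType) (r : rel T) (L R : {set T}) x p :
  is_separation r L R -> x \in L -> last x p \in R -> path r x p ->
  exists2 v, v \in x :: p & v \in L :&: R.
Proof.
case=> hr hcov; elim: p x => [|y p IH] x /=.
  by move=> hx hxR _; exists x; rewrite ?mem_head // inE hx hxR.
move=> hx hl /andP [hxy hp].
case hxR : (x \in R); first by exists x; rewrite ?mem_head // inE hx hxR.
have hy : y \in L by move: (hr x y hxy); rewrite hxR /= orbF => /andP [].
by have [v hv1 hv2] := IH y hy hl hp; exists v; rewrite // inE hv1 orbT.
Qed.

Section DecompositionSides.
Variables (T : finType) (e : rel T) (B : seq {set T}).
Hypothesis hpd : is_path_decomposition e B.

Lemma pd_convex v i j k : i <= j -> j <= k -> k < size B ->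
  v \in bag B i -> v \in bag B k -> v \in bag B j.
Proof. by case: hpd => [_ [_ [_ h]]]; apply: h. Qed.

Definition bags_before i := [set v | [exists j : 'I_(size B), (j < i) && (v \in bag B j)]].
Definition bags_from i := [set v | [exists j : 'I_(size B), (i <= j) && (v \in bag B j)]].

Lemma bags_beforeP v i :
  reflect (exists j, [/\ j < i, j < size B & v \in bag B j]) (v \in bags_before i).
Proof.
rewrite inE; apply: (iffP existsP) => [[j /andP [h1 h2]] | [j [h1 h2 h3]]]; first by exists j.
by exists (Ordinal h2); rewrite /= h1 h3.
Qed.

Lemma bags_fromP v i :
  reflect (exists j, [/\ i <= j, j < size B & v \in bag B j]) (v \in bags_from i).
Proof.
rewrite inE; apply: (iffP existsP) => [[j /andP [h1 h2]] | [j [h1 h2 h3]]]; first by exists j.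
by exists (Ordinal h2); rewrite /= h1 h3.
Qed.

Lemma separation_bags i : is_separation e (bags_before i) (bags_from i).
Proof.
case: hpd => _ [hedge [hcov _]]; split => [x y /hedge [j hj /andP [hx hy]] | v].
  case: (ltnP j i) => hji; [apply/orP; left | apply/orP; right].
    by apply/andP; split; apply/bags_beforeP; exists j.
  by apply/andP; split; apply/bags_fromP; exists j.
have [j hj hv] := hcov v; case: (ltnP j i) => hji; [apply/orP; left | apply/orP; right].
  by apply/bags_beforeP; exists j.
by apply/bags_fromP; exists j.
Qed.

Lemma bags_before_from v i : v \in bags_before i -> v \in bags_from i ->
  [/\ 0 < i, i < size B, v \in bag B i.-1 & v \in bag B i].
Proof.
move=> /bags_beforeP [j1 [h1 h1' hv1]] /bags_fromP [j2 [h2 h2' hv2]].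
have hi0 : 0 < i by apply: leq_ltn_trans (leq0n j1) h1.
split => //; first exact: leq_ltn_trans h2 h2'.
  apply: (pd_convex (i := j1) (k := j2)) => //; first by rewrite -ltnS prednK.
  exact: leq_trans (leq_pred _) h2.
exact: (pd_convex (i := j1) (k := j2)) (ltnW _) _ _ _ _.
Qed.

Lemma bags_before_mono i i' : i <= i' -> bags_before i \subset bags_before i'.
Proof.
move=> h; apply/subsetP => v /bags_beforeP [j [h1 h2 h3]]; apply/bags_beforeP.
by exists j; split => //; apply: leq_trans h1 h.
Qed.

Lemma bags_from_anti i i' : i <= i' -> bags_from i' \subset bags_from i.
Proof.
move=> h; apply/subsetP => v /bags_fromP [j [h1 h2 h3]]; apply/bags_fromP.
by exists j; split => //; apply: leq_trans h h1.
Qed.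

Lemma bag_sub_bags_before j i : j < size B -> j < i -> bag B j \subset bags_before i.
Proof. by move=> h1 h2; apply/subsetP => v hv; apply/bags_beforeP; exists j. Qed.

Lemma bag_sub_bags_from j i : i <= j -> j < size B -> bag B j \subset bags_from i.
Proof. by move=> h1 h2; apply/subsetP => v hv; apply/bags_fromP; exists j. Qed.

Lemma bags_before_from_sub_bag j : bags_before j.+1 :&: bags_from j \subset bag B j.
Proof.
apply/subsetP => v; rewrite in_setI.
case/andP => /bags_beforeP [j1 [h1 _ hv1]] /bags_fromP [j2 [h2 h2' hv2]].
exact: (pd_convex (i := j1) (k := j2)).
Qed.

Lemma bag_sub_next j : j.+1 < size B ->
  bag B j \subset bags_from j.+1 -> bag B j \subset bag B j.+1.
Proof.
move=> hj hs; apply/subsetP => v hv; have /bags_fromP [j2 [h2 h2' hv2]] := subsetP hs v hv.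
exact: (pd_convex (i := j) (k := j2)).
Qed.

Lemma bag_sub_prev j : 0 < j -> j < size B ->
  bag B j \subset bags_before j -> bag B j \subset bag B j.-1.
Proof.
move=> hj0 hj hs; apply/subsetP => v hv; have /bags_beforeP [j1 [h1 h1' hv1]] := subsetP hs v hv.
apply: (pd_convex (i := j1) (k := j)) => //; first by rewrite -ltnS prednK.
exact: leq_pred.
Qed.

Lemma card_bags_window s d w : (forall j, s <= j -> j <= s + d -> #|bag B j| <= w) ->
  #|bags_before (s + d).+1 :&: bags_from s| <= d.+1 * w.
Proof.
elim: d => [|d IH] h.
  rewrite addn0 mul1n; apply: leq_trans (h s (leqnn s) (leq_addr 0 s)).
  exact/subset_leq_card/bags_before_from_sub_bag.
have hsub : bags_before (s + d.+1).+1 :&: bags_from s \subset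
    (bags_before (s + d).+1 :&: bags_from s) :|: bag B (s + d.+1).
  apply/subsetP => v; rewrite in_setU !in_setI => /andP [/bags_beforeP [j [h1 h1' hv]] hvs].
  move: h1; rewrite ltnS leq_eqVlt => /orP [/eqP hj | hjt]; first by rewrite -hj hv orbT.
  by rewrite hvs andbT; apply/orP; left; apply/bags_beforeP; exists j; rewrite -addnS.
apply: leq_trans (subset_leq_card hsub) _; apply: leq_trans (leq_card_setU _ _) _.
rewrite mulSn addnC; apply: leq_add; first by apply: h; rewrite ?leq_addr.
by apply: IH => j h1 h2; apply: h; rewrite // addnS ltnW.
Qed.

End DecompositionSides.

(* Each new bag [i] contains the old bag [g i]; were two consecutive new bags
   nested, [g i] or [g i.+1] would lie in the adhesion set [C i :&: D i], hence
   in the neighbouring old bag, against properness of [B]. *)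
Lemma chain_decomp_proper (T : finType) (e : rel T) (B : seq {set T}) m
    (C D : nat -> {set T}) (g : nat -> nat) :
  is_path_decomposition e B -> proper_pd B ->
  (forall k, k < m -> is_separation e (C k) (D k)) ->
  (forall k, k.+1 < m -> (C k \subset C k.+1) && (D k.+1 \subset D k)) ->
  (forall i, i <= m -> g i < size B) ->
  (forall i, i <= m -> bag B (g i) \subset bag (chain_decomp m C D) i) ->
  (forall i, i < m -> g i < g i.+1) ->
  (forall i, i < m -> C i :&: D i \subset bags_from B (g i).+1 :&: bags_before B (g i.+1)) ->
  proper_pd (chain_decomp m C D).
Proof.
move=> hpd hprop hsep hnest hg hbag hinc hadh.
apply: (proper_pd_adjacent (chain_decomp_pd hsep hnest)) => i.
rewrite size_chain_decomp ltnS => him.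
have hgi := hinc i him; have hgS := hg _ him.
apply/andP; split; apply/negP => hsub.
- have hsubCD : bag B (g i) \subset C i :&: D i.
    rewrite -(chain_decomp_adhesion hnest him); apply: subset_trans (hbag i (ltnW him)) _.
    by rewrite subsetI subxx hsub.
  have hgS' : (g i).+1 < size B := leq_ltn_trans hgi hgS.
  have /negP [] := hprop (g i) (g i).+1 (ltnW hgS') hgS' (@n_Sn (g i)).
  apply: (bag_sub_next hpd hgS'); apply: subset_trans hsubCD _.
  exact: subset_trans (hadh i him) (subsetIl _ _).
- have hsubCD : bag B (g i.+1) \subset C i :&: D i.
    rewrite -(chain_decomp_adhesion hnest him); apply: subset_trans (hbag i.+1 him) _.
    by rewrite subsetI subxx hsub.
  have hpos : 0 < g i.+1 by apply: leq_ltn_trans hgi.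
  have hne : g i.+1 <> (g i.+1).-1 by lia.
  have /negP [] := hprop (g i.+1) (g i.+1).-1 hgS (leq_ltn_trans (leq_pred _) hgS) hne.
  apply: (bag_sub_prev hpd hpos hgS); apply: subset_trans hsubCD _.
  exact: subset_trans (hadh i him) (subsetIr _ _).
Qed.

(** * Windows of a path decomposition *)

Section Windows.
Variables (T : finType) (e : rel T) (B : seq {set T}) (a w : nat).
Hypothesis hsym : symmetric e.
Hypothesis hpd : is_path_decomposition e B.
Hypothesis hprop : proper_pd B.
Hypothesis hwid : interior_width_le B w.
Hypothesis hadh : adhesion_le B a.

(* [adh j] is the adhesion set between bags [j.-1] and [j]; for [s < t],
   [window s t] is the union of the bags [s <= j < t]. *)
Definition adh j := bags_before B j :&: bags_from B j.
Definition window s t := bags_before B t :&: bags_from B s.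
Definition window_rel s t : rel T := [rel x y | [&& e x y, x \in window s t & y \in window s t]].

Lemma window_rel_sym s t : symmetric (window_rel s t).
Proof. by move=> x y; rewrite /window_rel /= hsym; case: (x \in _); case: (y \in _). Qed.

Lemma sub_window_rel s t : subrel (window_rel s t) e.
Proof. by move=> x y /and3P []. Qed.

Lemma adh_sub_window s t : s <= t -> (adh s \subset window s t) && (adh t \subset window s t).
Proof. by move=> hst; rewrite setSI ?setIS ?bags_before_mono ?bags_from_anti. Qed.

Lemma card_adh j : 0 < j -> j < size B -> #|adh j| <= a.
Proof.
move=> h0 h1; apply: leq_trans (hadh (i := j.-1) _); last by rewrite prednK.
apply/subset_leq_card/subsetP => v; rewrite /adh in_setI => /andP [hl hr].
by have [_ _ h3 h4] := bags_before_from hpd hl hr; rewrite prednK // in_setI h3.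
Qed.

Lemma adh_separates s t j : s <= j -> j <= t -> separates (window_rel s t) (adh j) (adh s) (adh t).
Proof.
move=> hsj hjt [|x p] //= /andP [hp _]; rewrite /adh !in_setI => /andP [hx _] /andP [_ hl].
have hsep : is_separation (window_rel s t) (bags_before B j) (bags_from B j).
  case: (separation_bags hpd j) => hedge hcov; split => // x' y' /and3P [hxy _ _].
  exact: hedge.
have [v hv1 hv2] := path_crosses_separation hsep (subsetP (bags_before_mono B hsj) _ hx)
  (subsetP (bags_from_anti B hjt) _ hl) hp.
by exists v.
Qed.

(* bags: the union of the bags before [s], the bags [s, ..., s + m - 2], and
   the union of the bags from [s + m - 1] on *)
Definition window_decomp s m :=
  chain_decomp m (fun k => bags_before B (s + k)) (fun k => bags_from B (s + k)).

Lemma window_decomp_pd s m : is_path_decomposition e (window_decomp s m).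
Proof.
apply: chain_decomp_pd => [k _ | k _]; first exact: separation_bags.
by rewrite bags_before_mono ?bags_from_anti // addnS.
Qed.

Lemma window_decomp_adhesion s m k : k < m ->
  bag (window_decomp s m) k :&: bag (window_decomp s m) k.+1 = adh (s + k).
Proof.
by move=> hk; apply: chain_decomp_adhesion => // j _; rewrite bags_before_mono ?bags_from_anti // addnS.
Qed.

Lemma window_decomp_proper s m : 0 < s -> s + m <= size B -> proper_pd (window_decomp s m).
Proof.
move=> hs hsm; apply: (chain_decomp_proper (g := fun i => (s + i).-1) hpd hprop).
- by move=> k _; apply: separation_bags.
- by move=> k _; rewrite bags_before_mono ?bags_from_anti // addnS.
- by move=> i hi; lia.
- move=> i hi; rewrite bag_chain_decomp // subsetI /chain_left /chain_right; apply/andP; split.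
    by case: ifP => hi'; rewrite ?subsetT // bag_sub_bags_before; lia.
  by case: ifP => hi0; rewrite ?subsetT // bag_sub_bags_from; move/negbT: hi0; lia.
- by move=> i hi; lia.
move=> i hi; rewrite setIC.
have -> : (s + i).-1.+1 = s + i by lia.
by have -> : (s + i.+1).-1 = s + i by lia.
Qed.

Lemma window_decomp_width s m : 0 < s -> s + m <= size B ->
  interior_width_le (window_decomp s m) w.
Proof.
move=> hs hsm i hi0; rewrite size_chain_decomp /= => hi.
rewrite bag_chain_decomp; last by lia.
rewrite /chain_left /chain_right hi (_ : (i == 0) = false); last by lia.
apply: leq_trans (hwid (i := (s + i).-1) _ _); try lia.
apply/subset_leq_card; apply: subset_trans (bags_before_from_sub_bag hpd (s + i).-1).
have -> : (s + i).-1.+1 = s + i by lia.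
by have -> : s + i.-1 = (s + i).-1 by lia.
Qed.

(* All adhesion sets of the window then have exactly [a] vertices, and
   Menger's theorem links its two ends. *)
Lemma linked_window_decomp s t : 0 < s -> s < t -> t < size B ->
  separators_ge (window_rel s t) a (adh s) (adh t) ->
  exists2 B', [/\ is_path_decomposition e B', proper_pd B', p_linked e B' a
     & interior_width_le B' w] & size B' = (t - s).+2.
Proof.
move=> hs hst htN hconn; pose m := (t - s).+1.
have hsm : s + m <= size B by rewrite /m; lia.
exists (window_decomp s m); last by rewrite size_chain_decomp.
split; [exact: window_decomp_pd | exact: window_decomp_proper | | exact: window_decomp_width].
split.
  move=> i hi0; rewrite size_chain_decomp => hi.
  rewrite -(prednK hi0) window_decomp_adhesion; last by lia.
  apply/eqP; rewrite eqn_leq card_adh ?andTb; try lia.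
  by apply: hconn; apply: adh_separates; lia.
rewrite /Rs /Lt size_chain_decomp (_ : 1 < m.+1); last by rewrite /m.
rewrite window_decomp_adhesion // addn0 (_ : m.+1.-1 = m.-1.+1) // window_decomp_adhesion; last by lia.
rewrite (_ : s + m.-1 = t); last by rewrite /m; lia.
have [Q [hQ hd]] := menger (window_rel_sym s t) hconn.
exists Q; split => // i; case/and3P: (hQ i) => g -> ->; rewrite !andbT.
exact: sub_gpath (@sub_window_rel s t) g.
Qed.

Lemma path_window_rel s t x p : path (window_rel s t) x p -> x \in window s t ->
  {subset x :: p <= window s t}.
Proof.
elim: p x => [|y p IH] x /=; first by move=> _ hx v; rewrite inE => /eqP ->.
move=> /andP [/and3P [_ _ hy] hp] hx v; rewrite inE => /orP [/eqP -> // | hv].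
exact: IH hp hy v hv.
Qed.

Lemma separates_window s t X A C : separates (window_rel s t) X A C ->
  A \subset window s t -> separates (window_rel s t) (X :&: window s t) A C.
Proof.
move=> hX hA P gP sP eP; have [v hv hvX] := hX P gP sP eP; exists v; rewrite // in_setI hvX.
case: P gP sP eP hv => [|x p] // /andP [hp _] hx _ hv.
exact: (path_window_rel hp (subsetP hA x hx) hv).
Qed.

(* Given a separator [X] of the ends of a window, [far_side] is the part of
   the graph beyond [X]: everything right of the window, and what can be
   reached from [adh t] inside the window without meeting [X]. *)
Section FarSide.
Variables (s t : nat) (X : {set T}).
Hypothesis hst : s < t.
Hypothesis hX : separates (window_rel s t) X (adh s) (adh t).

Definition far_side := (bags_from B t :\: adh t) :|: reach (window_rel s t) X (adh t).

Lemma reach_sub_window : reach (window_rel s t) X (adh t) \subset window s t.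
Proof.
apply/subsetP => z; rewrite inE => /existsP [c /and3P [hc _ /connectP [p hp ->]]].
have hcW : c \in window s t by move: hc; apply/subsetP; case/andP: (adh_sub_window (ltnW hst)).
by apply: (path_window_rel (sub_path _ hp) hcW); [move=> x y /and3P [] | apply: mem_last].
Qed.

Lemma reach_notin_adh z : z \in reach (window_rel s t) X (adh t) -> z \notin adh s.
Proof.
move=> hz; apply/negP => hzs.
apply: (reach_disjoint (window_rel_sym s t) (separates_sym (window_rel_sym s t) hX) hz).
by apply: reach_self => //; apply: reach_notin hz.
Qed.

Lemma far_side_not_before z : z \in far_side -> z \notin bags_before B s.
Proof.
rewrite /far_side in_setU in_setD => /orP [/andP [hA hR] | hY]; apply/negP => hL.
  by move/negP: hA; apply; rewrite in_setI hR andbT (subsetP (bags_before_mono B (ltnW hst))).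
move: (reach_notin_adh hY); rewrite in_setI hL /=; move/negP; apply.
by move: (subsetP reach_sub_window z hY); rewrite in_setI => /andP [].
Qed.

Lemma far_side_sub_from : far_side \subset bags_from B s.
Proof.
apply/subsetP => z hz; case: (separation_bags hpd s) => _ /(_ z).
by rewrite (negbTE (far_side_not_before hz)).
Qed.

Lemma bags_from_sub_far_side : bags_from B t \subset far_side :|: X.
Proof.
apply/subsetP => v hv; rewrite /far_side !in_setU in_setD hv andbT.
case hA : (v \in adh t) => //=; case hvX : (v \in X); rewrite ?orbT //.
by rewrite reach_self // hvX.
Qed.

Lemma not_far_side_sub_before : ~: far_side \subset bags_before B t.
Proof.
apply/subsetP => v; rewrite in_setC => hv; case: (separation_bags hpd t) => _ /(_ v).
case/orP => // hR; move: hv; rewrite /far_side in_setU in_setD hR andbT negb_or negbK.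
by rewrite in_setI => /andP [/andP []].
Qed.

Lemma far_side_edge x y : e x y -> x \in far_side -> y \notin X -> y \in far_side.
Proof.
move=> hxy hx hyX; have hedge i := (separation_bags hpd i).1.
have from_t : y \in bags_from B t -> y \in far_side.
  by move/(subsetP bags_from_sub_far_side); rewrite in_setU (negbTE hyX) orbF.
move: hx; rewrite {1}/far_side in_setU in_setD => /orP [/andP [hA hR] | hY].
  have hxL : x \notin bags_before B t by apply: contra hA => hL; rewrite in_setI hL hR.
  by apply: from_t; move: (hedge t x y hxy); rewrite (negbTE hxL) /= => /andP [].
have hxW := subsetP reach_sub_window x hY.
have hyRs : y \in bags_from B s.
  have hxL : x \notin bags_before B s.
    by apply: far_side_not_before; rewrite in_setU hY orbT.
  by move: (hedge s x y hxy); rewrite (negbTE hxL) /= => /andP [].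
case hyRt : (y \in bags_from B t); first exact: from_t.
have hyL : y \in bags_before B t by case: (separation_bags hpd t) => _ /(_ y); rewrite hyRt orbF.
rewrite in_setU; apply/orP; right; apply: (reach_step hY).
by rewrite /avoid_rel /= (reach_notin hY) hyX andbT /window_rel /= hxy hxW in_setI hyL hyRs.
Qed.

Lemma far_side_separation : is_separation e (~: far_side) (far_side :|: X).
Proof.
split => [x y hxy | v]; last by rewrite in_setC (in_setU _ far_side X); case: (v \in far_side).
rewrite !in_setC !(in_setU _ far_side X).
case hx : (x \in far_side); case hy : (y \in far_side) => //=.
  by case hyX : (y \in X) => //; have := far_side_edge hxy hx (negbT hyX); rewrite hy.
case hxX : (x \in X) => //.
have hyx : e y x by rewrite hsym.
by have := far_side_edge hyx hy (negbT hxX); rewrite hx.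
Qed.

End FarSide.

Lemma far_side_next s t t' X X' : s < t -> t.+1 < t' ->
  separates (window_rel t.+1 t') X' (adh t.+1) (adh t') -> X' \subset window t.+1 t' ->
  (far_side t.+1 t' X' \subset far_side s t X) && (X' \subset far_side s t X :|: X).
Proof.
move=> hst htt' hX' hXW'; apply/andP; split; last first.
  apply: subset_trans hXW' _; apply: subset_trans (subsetIr _ _) _.
  exact: subset_trans (bags_from_anti B (leqnSn t)) (bags_from_sub_far_side _ _ _).
apply/subsetP => z hz; rewrite /far_side in_setU in_setD; apply/orP; left.
have hzL := far_side_not_before htt' hX' hz.
have hzR := subsetP (far_side_sub_from htt' hX') z hz.
rewrite (subsetP (bags_from_anti B (leqnSn t))) // andbT in_setI.
by apply: contra hzL => /andP [hL _]; apply: (subsetP (bags_before_mono B (leqnSn t))).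
Qed.

Definition block_start L k := (k * L.+1).+1.
Definition block_end L k := k.+1 * L.+1.

Section Coarsening.
Variables (M L : nat) (X : nat -> {set T}).
Local Notation sk := (block_start L).
Local Notation tk := (block_end L).
Hypothesis hL : 0 < L.
Hypothesis hMN : M * L.+1 < size B.
Hypothesis hX : forall k, k < M ->
  separates (window_rel (sk k) (tk k)) (X k) (adh (sk k)) (adh (tk k)).

Definition cut_set k := X k :&: window (sk k) (tk k).
Definition cut_side k := far_side (sk k) (tk k) (cut_set k).
Definition coarse_decomp := chain_decomp M (fun k => ~: cut_side k) (fun k => cut_side k :|: cut_set k).

Lemma cut_window k : k < M -> sk k < tk k /\ tk k < size B.
Proof. by move=> hk; split; rewrite /block_start /block_end; [nia | apply: leq_ltn_trans hMN; nia]. Qed.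

Lemma cut_set_separates k : k < M ->
  separates (window_rel (sk k) (tk k)) (cut_set k) (adh (sk k)) (adh (tk k)).
Proof.
move=> hk; apply: separates_window; first exact: hX.
by case/andP: (adh_sub_window (ltnW (cut_window hk).1)).
Qed.

Lemma coarse_separation k : k < M -> is_separation e (~: cut_side k) (cut_side k :|: cut_set k).
Proof. by move=> hk; apply: far_side_separation (cut_set_separates hk); apply: (cut_window hk).1. Qed.

Lemma coarse_nested k : k.+1 < M ->
  (~: cut_side k \subset ~: cut_side k.+1) && (cut_side k.+1 :|: cut_set k.+1 \subset cut_side k :|: cut_set k).
Proof.
move=> hk; have [hk1 _] := cut_window hk; have [hk0 _] := cut_window (ltnW hk).
case/andP: (far_side_next (cut_set k) hk0 hk1 (cut_set_separates hk) (subsetIr _ _)) => hZ hXZ.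
by rewrite setCS hZ subUset hXZ andbT (subset_trans hZ (subsetUl _ _)).
Qed.

Lemma coarse_adhesion k : k < M ->
  bag coarse_decomp k :&: bag coarse_decomp k.+1 \subset cut_set k.
Proof.
move=> hk; rewrite (chain_decomp_adhesion coarse_nested hk).
apply/subsetP => v; rewrite in_setI in_setC (in_setU _ (cut_side k)).
by case: (v \in cut_side k).
Qed.

Lemma coarse_pd : is_path_decomposition e coarse_decomp.
Proof. exact: chain_decomp_pd coarse_separation coarse_nested. Qed.

Lemma coarse_proper : proper_pd coarse_decomp.
Proof.
have hg i : i <= M -> i * L.+1 < size B by move=> hi; apply: leq_ltn_trans hMN; apply: leq_mul.
apply: (chain_decomp_proper (g := fun i => i * L.+1) hpd hprop coarse_separation coarse_nested hg).
- move=> i hi; rewrite bag_chain_decomp // subsetI /chain_left /chain_right; apply/andP; split.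
    case: ifP => hi'; rewrite ?subsetT //; apply/subsetP => v hv; rewrite in_setC.
    move: (subsetP (bag_sub_bags_before (hg i hi) (ltnSn _)) v hv); apply: contraL => hvZ.
    exact: (far_side_not_before (cut_window hi').1 (cut_set_separates hi') hvZ).
  case: ifP => hi0; rewrite ?subsetT //; case: i hi hi0 => // i hi _.
  by apply: subset_trans (bags_from_sub_far_side _ _ _); apply: bag_sub_bags_from; rewrite ?hg.
- by move=> i hi; rewrite ltn_pmul2r.
move=> i hi; rewrite -(chain_decomp_adhesion coarse_nested hi).
apply: subset_trans (coarse_adhesion hi) _; apply: subset_trans (subsetIr _ _) _.
by rewrite /window setIC.
Qed.

(* new bag [i.+1] lies in the window from old bag [sk i] to old bag [tk i.+1] *)
Lemma coarse_width : interior_width_le coarse_decomp (L.*2.+1 * w.+1).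
Proof.
move=> i hi0; rewrite size_chain_decomp /= => hi.
rewrite bag_chain_decomp ?(ltnW hi) // /chain_left /chain_right hi -(prednK hi0) /=.
case: i hi0 hi => // i _ hi; apply: leq_trans (leqnSn _).
have htk : (sk i + L.*2).+1 = tk i.+1 by rewrite /block_start /block_end -addnn; nia.
have [hwin0 _] := cut_window (ltnW hi); have [_ hwin1] := cut_window hi.
have hsub : ~: cut_side i.+1 :&: (cut_side i :|: cut_set i) \subset
    bags_before B (sk i + L.*2).+1 :&: bags_from B (sk i).
  rewrite htk; apply: setISS; first exact: not_far_side_sub_before.
  rewrite subUset (far_side_sub_from hwin0 (cut_set_separates (ltnW hi))) /=.
  exact: subset_trans (subsetIr _ _) (subsetIr _ _).
apply: leq_trans (subset_leq_card hsub) _; apply: (card_bags_window hpd) => j hj1 hj2.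
apply: hwid; first exact: leq_trans hj1.
rewrite -ltnS prednK; last exact: leq_ltn_trans hwin1.
by apply: leq_ltn_trans hwin1; rewrite -htk ltnS.
Qed.

End Coarsening.

Lemma linked_or_coarse M L : 0 < M -> 0 < L -> M * L.+1 < size B ->
  (exists2 B', [/\ is_path_decomposition e B', proper_pd B', p_linked e B' a
     & interior_width_le B' w] & size B' = L.+2) \/
  (0 < a /\ exists2 B', [/\ is_path_decomposition e B', proper_pd B',
     interior_width_le B' (L.*2.+1 * w.+1) & adhesion_le B' a.-1] & size B' = M.+1).
Proof.
move=> hM hL hMN; pose sk := block_start L; pose tk := block_end L.
have hwin k : k < M -> [/\ 0 < sk k, sk k < tk k & tk k < size B].
  by move=> hk; have [] := cut_window hL hMN hk.
case: (classic (exists2 k, k < M & separators_ge (window_rel (sk k) (tk k)) a (adh (sk k)) (adh (tk k)))).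
  case=> k hk hconn; left; have [h0 h1 h2] := hwin k hk.
  have [B' hB' hsize] := linked_window_decomp h0 h1 h2 hconn.
  by exists B'; rewrite // hsize /sk /tk /block_start /block_end; congr _.+2; nia.
move=> hno; right.
have hex k : exists X : {set T}, k < M ->
    separates (window_rel (sk k) (tk k)) X (adh (sk k)) (adh (tk k)) /\ #|X| < a.
  case: (ltnP k M) => hk; last by exists set0.
  have [X hX] : exists X, ~ (separates (window_rel (sk k) (tk k)) X (adh (sk k)) (adh (tk k)) -> a <= #|X|).
    by apply: not_all_ex_not => hall; apply: hno; exists k.
  have [hXs hXa] := imply_to_and _ _ hX.
  by exists X => _; rewrite ltnNge; split => //; apply/negP.
pose X k := proj1_sig (constructive_indefinite_description _ (hex k)).
have hX k : k < M -> separates (window_rel (sk k) (tk k)) (X k) (adh (sk k)) (adh (tk k)) /\ #|X k| < a.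
  by rewrite /X; case: (constructive_indefinite_description _ (hex k)).
split; first by case: (hX 0 hM) => _; apply: leq_ltn_trans.
have hXs k (hk : k < M) := (hX k hk).1.
exists (coarse_decomp M L X); last exact: size_chain_decomp.
split; [exact: coarse_pd hL hMN hXs | exact: coarse_proper hL hMN hXs | exact: coarse_width hL hMN hXs |].
move=> i; rewrite size_chain_decomp ltnS => hi.
apply: leq_trans (subset_leq_card (coarse_adhesion hL hMN hXs hi)) _.
apply: leq_trans (subset_leq_card (subsetIl _ _)) _.
by case: (hX i hi) => _ h; rewrite -ltnS prednK //; apply: leq_ltn_trans h.
Qed.

End Windows.

Theorem lemma3p6 (a w : nat) (f : nat -> nat) (f_mono : {homo f : m n / m <= n}) :
  exists w0 n0 : nat,
    forall (T : finType) (e : rel T), simple_graph e ->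
    forall B : seq {set T},
      is_path_decomposition e B -> proper_pd B ->
      interior_width_le B w -> adhesion_le B a -> n0 <= size B ->
      exists w' p : nat, [/\ w' <= w0, p <= a &
        exists B' : seq {set T},
          [/\ is_path_decomposition e B', proper_pd B', p_linked e B' p,
              interior_width_le B' w' & f w' <= size B']].
Proof.
elim: a w => [|a IH] w; pose L := (f w).+1.
  exists w, (1 * L.+1).+1 => T e [hsym _] B hpd hprop hwid hadh hN.
  case: (linked_or_coarse hsym hpd hprop hwid hadh (M := 1) (L := L) isT isT hN) => [[B' hB' hsize] | [//]].
  by exists w, 0; split => //; exists B'; case: hB'; split => //; rewrite hsize /L; lia.
have [w0' [n0' IH']] := IH (L.*2.+1 * w.+1).
exists (maxn w w0'), (n0'.+1 * L.+1).+1 => T e hsg B hpd hprop hwid hadh hN.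
case: (linked_or_coarse hsg.1 hpd hprop hwid hadh (M := n0'.+1) (L := L) isT isT hN).
  case=> B' [h1 h2 h3 h4] hsize; exists w, a.+1; split; rewrite ?leq_maxl //.
  by exists B'; split => //; rewrite hsize /L; lia.
case=> _ [B' [h1 h2 h3 h4] hsize].
have [w' [p [hw' hp hB'']]] := IH' T e hsg B' h1 h2 h3 h4 (ltac:(rewrite hsize; lia)).
by exists w', p; split => //; [apply: leq_trans hw' (leq_maxr _ _) | apply: leq_trans hp _].
Qed.
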